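(* For every division ring $K$, every torsion-free group $G$ and every integer $n\ge2$, there are no $a,b\in K[G]$ with $\operatorname{rank}(a)=2$, $\operatorname{rank}(b)=n$ and $ab=1$.
   Context: $K[G]$ is the group ring; the rank of an element is the number of group elements with nonzero coefficient. A group is torsion-free if its only element of finite order is the identity. *)

From Stdlib Require List.
From mathcomp Require Import all_boot all_order all_algebra.
Set Implicit Arguments. Unset Strict Implicit. Unset Printing Implicit Defensive.
Import GRing.Theory.
Local Open Scope ring_scope.

Definition is_group (G : Type) (mul : G -> G -> G) (inv : G -> G) (e : G) : Prop :=
  (forall x y z, mul x (mul y z) = mul (mul x y) z) /\
  (forall x, mul e x = x) /\ (forall x, mul x e = x) /\
  (forall x, mul (inv x) x = e) /\ (forall x, mul x (inv x) = e).

Fixpoint gpow (G : Type) (mul : G -> G -> G) (e : G) (x : G) (n : nat) : G :=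
  match n with O => e | S m => mul x (gpow mul e x m) end.

Definition torsion_free (G : Type) (mul : G -> G -> G) (e : G) : Prop :=
  forall (x : G) (n : nat), (0 < n)%N -> gpow mul e x n = e -> x = e.

Definition is_division_ring (K : unitRingType) : Prop :=
  forall x : K, x != 0 -> x \is a GRing.unit.

(* Elements of K[G] are functions G -> K with finite support.
   rank a = n: exactly n distinct group elements have nonzero coefficient. *)
Definition gr_rank (G : Type) (K : unitRingType) (a : G -> K) (n : nat) : Prop :=
  exists s : seq G, List.NoDup s /\ size s = n /\
    (forall g, a g != 0 <-> List.In g s).

(* Coefficient of (a * b) at g, computed over a duplicate-free list s
   containing the support of a:  (ab)(g) = sum_h a(h) b(h^-1 g). *)
Definition gr_conv (G : Type) (K : unitRingType) (mul : G -> G -> G) (inv : G -> G)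
  (s : seq G) (a b : G -> K) (g : G) : K :=
  \sum_(h <- s) a h * b (mul (inv h) g).

Definition gr_prod_is_one (G : Type) (K : unitRingType) (mul : G -> G -> G)
  (inv : G -> G) (e : G) (a b : G -> K) : Prop :=
  exists s : seq G, List.NoDup s /\ (forall h, a h != 0 -> List.In h s) /\
    forall g, (g = e -> gr_conv mul inv s a b g = 1) /\
              (g <> e -> gr_conv mul inv s a b g = 0).

From mathcomp Require Import all_boot all_order all_algebra.
From Stdlib Require Import Classical FinFun.
Set Implicit Arguments. Unset Strict Implicit. Unset Printing Implicit Defensive.
Import GRing.Theory.
Local Open Scope ring_scope.

(* Let supp a = {x, y}, t = y^-1 x and u = x^-1.  Comparing coefficients in
   ab = 1 at x h gives a(x) b(h) + a(y) b(t h) = 0 for h <> u, and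
   a(x) b(u) + a(y) b(t u) = 1.  As a(x), a(y) are units, b vanishes at h iff
   it vanishes at t h, except across the single edge u -- t u of the orbit of u
   under left multiplication by t.  Since t <> e and G is torsion-free this
   orbit is infinite, so the finitely supported b vanishes on both halves of it,
   in particular at u and at t u, and the coefficient of e in ab is 0. *)

Section SumsOverLists.
Variables (T : Type) (R : nmodType) (F : T -> R).

Lemma big_In_eq0 (s : seq T) :
  (forall h, List.In h s -> F h = 0) -> \sum_(h <- s) F h = 0.
Proof.
elim: s => [|h s IH] F0; first by rewrite big_nil.
rewrite big_cons F0 /=; last by left.
by rewrite add0r IH // => h' h'_in; apply: F0; right.
Qed.

Lemma big_In_single (x : T) (s : seq T) :
  List.NoDup s -> List.In x s -> (forall h, List.In h s -> h <> x -> F h = 0) ->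
  \sum_(h <- s) F h = F x.
Proof.
elim: s => [|h s IH] //= /List.NoDup_cons_iff [h_notin nodup] x_in F0.
rewrite big_cons; case: (classic (h = x)) => [eq_hx|h_neq_x].
  subst x; rewrite big_In_eq0 ?addr0 // => h' h'_in; apply: F0; first by right.
  by move=> eq_h'; apply: h_notin; rewrite -eq_h'.
rewrite F0 /=; [|by left|by []].
rewrite add0r IH //; first by case: x_in.
by move=> h' h'_in; apply: F0; right.
Qed.

Lemma big_In_pair (x y : T) (s : seq T) :
  x <> y -> List.NoDup s -> List.In x s -> List.In y s ->
  (forall h, List.In h s -> h <> x -> h <> y -> F h = 0) ->
  \sum_(h <- s) F h = F x + F y.
Proof.
elim: s => [|h s IH] //= x_neq_y /List.NoDup_cons_iff [h_notin nodup] x_in y_in F0.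
have tail_neq h' : List.In h' s -> h' <> h.
  by move=> h'_in eq_h'; apply: h_notin; rewrite -eq_h'.
rewrite big_cons; case: (classic (h = x)) => [eq_hx|h_neq_x].
  subst x; rewrite (big_In_single (x := y) nodup) //; first by case: y_in.
  by move=> h' h'_in; apply: F0 (or_intror h'_in) (tail_neq _ h'_in).
case: (classic (h = y)) => [eq_hy|h_neq_y].
  subst y; rewrite [RHS]addrC (big_In_single (x := x) nodup) //; first by case: x_in.
  by move=> h' h'_in h'_neq_x; apply: F0 (or_intror h'_in) h'_neq_x (tail_neq _ h'_in).
rewrite F0 /=; [|by left|by []|by []].
rewrite add0r IH //; [by case: x_in|by case: y_in|].
by move=> h' h'_in; apply: F0; right.
Qed.

End SumsOverLists.

Lemma gr_conv_pair (G : Type) (K : unitRingType) (mul : G -> G -> G) (inv : G -> G)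
    (s : seq G) (a b : G -> K) (x y g : G) :
  x <> y -> List.NoDup s -> List.In x s -> List.In y s ->
  (forall h, h <> x -> h <> y -> a h = 0) ->
  gr_conv mul inv s a b g = a x * b (mul (inv x) g) + a y * b (mul (inv y) g).
Proof.
move=> x_neq_y nodup x_in y_in a0.
by apply: big_In_pair => // h _ h_neq_x h_neq_y; rewrite a0 // mul0r.
Qed.

Lemma unit_lincomb_eq0 (R : unitRingType) (p q x y : R) :
  p \is a GRing.unit -> q \is a GRing.unit -> p * x + q * y = 0 ->
  (x == 0) = (y == 0).
Proof.
move=> p_unit q_unit /eqP; rewrite addr_eq0 => /eqP pq.
apply/eqP/eqP => [x0|y0].
  by apply: (mulrI q_unit); rewrite mulr0 -[q * y]opprK -pq x0 mulr0 oppr0.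
by apply: (mulrI p_unit); rewrite pq y0 !mulr0 oppr0.
Qed.

Section TorsionFreeGroup.
Variables (G : Type) (mul : G -> G -> G) (inv : G -> G) (e : G).
Hypothesis group_G : is_group mul inv e.
Hypothesis torsion_free_G : torsion_free mul e.

Let mulA : forall x y z, mul x (mul y z) = mul (mul x y) z.
Proof. by case: group_G. Qed.
Let mul1g : forall x, mul e x = x.
Proof. by case: group_G => _ []. Qed.
Let mulg1 : forall x, mul x e = x.
Proof. by case: group_G => _ [_ []]. Qed.
Let mulVg : forall x, mul (inv x) x = e.
Proof. by case: group_G => _ [_ [_ []]]. Qed.
Let mulgV : forall x, mul x (inv x) = e.
Proof. by case: group_G => _ [_ [_ [_]]]. Qed.

Lemma iter_mulE (t v : G) (k : nat) : iter k (mul t) v = mul (gpow mul e t k) v.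
Proof. by elim: k => [|k IH] /=; rewrite ?mul1g // IH mulA. Qed.

Lemma iter_mul_fixed (t v : G) (j : nat) : (0 < j)%N -> iter j (mul t) v = v -> t = e.
Proof.
move=> j_gt0; rewrite iter_mulE => fix_v; apply: (torsion_free_G j_gt0).
by move/(congr1 (mul^~ (inv v))): fix_v; rewrite -mulA !mulgV mulg1.
Qed.

Lemma iter_mul_neq (t v : G) (k : nat) : t <> e -> iter k.+1 (mul t) v <> v.
Proof. by move=> t_neq_e /(iter_mul_fixed (ltn0Sn k)). Qed.

Lemma iter_mul_inj (t v : G) : t <> e -> injective (fun k => iter k (mul t) v).
Proof.
move=> t_neq_e.
have lt_neq k m : (k < m)%N -> iter k (mul t) v <> iter m (mul t) v.
  move=> lt_km eq_km; apply: t_neq_e.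
  apply: (iter_mul_fixed (j := m - k) (v := iter k (mul t) v)).
    by rewrite subn_gt0.
  by rewrite -iterD subnK; [rewrite eq_km | exact: ltnW].
move=> k m /= eq_km.
have [lt_km|lt_mk|//] := ltngtP k m; first by case: (lt_neq _ _ lt_km eq_km).
by case: (lt_neq _ _ lt_mk (esym eq_km)).
Qed.

Lemma orbit_not_in_list (s : seq G) (t v : G) :
  t <> e -> ~ (forall k, List.In (iter k (mul t) v) s).
Proof.
move=> t_neq_e orbit_in.
pose orbit := List.map (fun k => iter k (mul t) v) (List.seq 0 (size s).+1).
have orbit_nodup : List.NoDup orbit.
  apply: Injective_map_NoDup (List.seq_NoDup _ _).
  exact: iter_mul_inj.
have orbit_incl : List.incl orbit s.
  by move=> g /List.in_map_iff [k [<- _]].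
have length_size (r : seq G) : List.length r = size r by elim: r => //= ? ? ->.
have := List.NoDup_incl_length orbit_nodup orbit_incl.
by rewrite List.length_map List.length_seq length_size => /leP; rewrite ltnn.
Qed.

Lemma orbit_leaves_support (P : G -> Prop) (s : seq G) (t v : G) :
  (forall g, P g -> List.In g s) -> t <> e ->
  (forall k, P (iter k (mul t) v) -> P (iter k.+1 (mul t) v)) -> ~ P v.
Proof.
move=> supp t_neq_e step Pv; apply: (orbit_not_in_list (s := s) (v := v) t_neq_e) => k.
by apply: supp; elim: k => // k; apply: step.
Qed.

Lemma no_two_term_inverse (K : unitRingType) (b : G -> K) (s : seq G)
    (p q : K) (x y : G) :
  p \is a GRing.unit -> q \is a GRing.unit -> x <> y ->
  (forall g, b g != 0 -> List.In g s) ->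
  ~ (forall g,
      (g = e -> p * b (mul (inv x) g) + q * b (mul (inv y) g) = 1) /\
      (g <> e -> p * b (mul (inv x) g) + q * b (mul (inv y) g) = 0)).
Proof.
move=> p_unit q_unit x_neq_y supp_b prod.
pose t := mul (inv y) x; pose u := inv x.
have t_neq_e : t <> e.
  by move=> t_e; apply: x_neq_y; rewrite -[x]mul1g -(mulgV y) -mulA -/t t_e mulg1.
have step h : h <> u -> (b h == 0) = (b (mul t h) == 0).
  move=> h_neq_u; apply: unit_lincomb_eq0 p_unit q_unit _.
  have [_ <-] := prod (mul x h); first by rewrite !mulA mulVg mul1g.
  by move=> xh_e; apply: h_neq_u; rewrite -[h]mul1g -(mulVg x) -mulA xh_e mulg1.
have at_u : p * b u + q * b (mul t u) = 1.
  by have [/(_ erefl) <- _] := prod e; rewrite /t /u !mulg1 -mulA mulgV mulg1.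
have btu : b (mul t u) = 0.
  apply/eqP/negPn/negP.
  apply: (orbit_leaves_support (P := fun g => b g != 0) supp_b t_neq_e) => k /=.
  by rewrite -!iterSr (step _ (iter_mul_neq (v := u) (k := k) t_neq_e)).
have bu : b u = 0.
  have invt_neq_e : inv t <> e.
    by move=> invt_e; apply: t_neq_e; rewrite -[t]mulg1 -invt_e mulgV.
  apply/eqP/negPn/negP.
  apply: (orbit_leaves_support (P := fun g => b g != 0) supp_b invt_neq_e) => k /=.
  by rewrite (step _ (iter_mul_neq (v := u) (k := k) invt_neq_e)) iterS mulA mulgV mul1g.
by move: at_u; rewrite bu btu !mulr0 addr0 => /esym/eqP; rewrite oner_eq0.
Qed.

End TorsionFreeGroup.

Theorem theorem6p2 (K : unitRingType) (G : Type)
  (mul : G -> G -> G) (inv : G -> G) (e : G) (n : nat) :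
  is_division_ring K -> is_group mul inv e -> torsion_free mul e -> (2 <= n)%N ->
  ~ (exists a b : G -> K,
       gr_rank a 2 /\ gr_rank b n /\ gr_prod_is_one mul inv e a b).
Proof.
move=> divK group_G torsion_free_G _
  [a [b [[sa [nodup_sa [size_sa supp_a]]] [[sb [_ [_ supp_b]]]
    [s [nodup_s [supp_s conv]]]]]]].
case: sa nodup_sa size_sa supp_a => [|x [|y [|? ?]]] // nodup_xy _ supp_a.
have x_neq_y : x <> y.
  by move=> eq_xy; move: nodup_xy; rewrite eq_xy => /List.NoDup_cons_iff [+ _]; apply; left.
have ax : a x != 0 by apply/supp_a; left.
have ay : a y != 0 by apply/supp_a; right; left.
have a_out h : h <> x -> h <> y -> a h = 0.
  move=> h_neq_x h_neq_y; have [//|/supp_a] := eqVneq (a h) 0.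
  by case=> [/esym|[/esym|[]]].
have supp_b_list g : b g != 0 -> List.In g sb by move/supp_b.
apply: (no_two_term_inverse group_G torsion_free_G (divK _ ax) (divK _ ay) x_neq_y
  supp_b_list) => g.
rewrite -(gr_conv_pair mul inv b g x_neq_y nodup_s (supp_s _ ax) (supp_s _ ay) a_out).
exact: conv.
Qed.
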